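(* Let $p\in(0,1)$, $\gamma>0$, $B>0$, $w,N\in\mathbb{N}$, and let $(\xi_j^{(N)*})_{j=1}^N$ be the unique maximizer of $\mathcal{T}_N$. Then for every $j\in\{1,\dots,N-1\}$, $$\xi_j^{(N)*}<\frac{B-\sum_{i=1}^{j}\xi_i^{(N)*}}{w}.$$
   Context: Logarithms are base 2. For an admissible (nonnegative, with sum at most $B$) sequence $(x_j)_{j\ge1}$, $$\mathcal{T}_\infty(x_1,x_2,\dots)=\sum_{k=1}^{w}p^2(1-p)^{k-1}\frac{k}{2}\log_2\!\Big(1+\gamma\frac{B}{k}\Big)+\sum_{j=1}^{\infty}p(1-p)^{j+w-1}\frac12\log_2(1+\gamma x_j)+\sum_{k=1}^{\infty}p^2(1-p)^{k+w-1}\frac{w}{2}\log_2\!\Big(1+\gamma\frac{B-\sum_{j=1}^{k}x_j}{w}\Big).$$ For $N\in\mathbb{N}$ and $\xi_1,\dots,\xi_N\ge0$ with $\sum_{j=1}^N\xi_j\le B$, define $\mathcal{T}_N(\xi_1,\dots,\xi_N)=\mathcal{T}_\infty(\xi_1,\dots,\xi_N,0,0,\dots)$. $\mathcal{T}_N$ has a unique maximizer over this compact set, denoted $(\xi_j^{(N)*})_{j=1}^N$. *)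

From Stdlib Require Import Reals Lra Lia.
From Coquelicot Require Import Coquelicot.
Open Scope R_scope.

Definition log2 (y : R) : R := ln y / ln 2.

Definition psum (x : nat -> R) (k : nat) : R := sum_n_m x 1 k.

(* T_infinity(x_1, x_2, ...) ; the sequence is x : nat -> R, only indices
   j >= 1 are used (x 0 is ignored).  Infinite sums are Coquelicot [Series]
   (sum over n >= 0, reindexed by j = n+1). *)
Definition T_inf (p gamma B : R) (w : nat) (x : nat -> R) : R :=
  sum_n_m (fun k => p ^ 2 * (1 - p) ^ (k - 1) * (INR k / 2)
                     * log2 (1 + gamma * (B / INR k))) 1 w
  + Series (fun n => p * (1 - p) ^ (S n + w - 1) * (1 / 2)
                     * log2 (1 + gamma * x (S n)))
  + Series (fun n => p ^ 2 * (1 - p) ^ (S n + w - 1) * (INR w / 2)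
                     * log2 (1 + gamma * ((B - psum x (S n)) / INR w))).

Definition pad (N : nat) (xi : nat -> R) : nat -> R :=
  fun j => if andb (Nat.leb 1 j) (Nat.leb j N) then xi j else 0.

Definition T_N (p gamma B : R) (w N : nat) (xi : nat -> R) : R :=
  T_inf p gamma B w (pad N xi).

Definition admissibleN (B : R) (N : nat) (xi : nat -> R) : Prop :=
  (forall j, (1 <= j <= N)%nat -> 0 <= xi j) /\ psum xi N <= B.

Definition is_maximizer (p gamma B : R) (w N : nat) (xi : nat -> R) : Prop :=
  admissibleN B N xi /\
  forall eta, admissibleN B N eta -> T_N p gamma B w N eta <= T_N p gamma B w N xi.

From Stdlib Require Import Reals Lra Lia Arith FunctionalExtensionality.
From Coquelicot Require Import Coquelicot.
Open Scope R_scope.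

(* By uniqueness, an admissible perturbation of the maximizer that does not decrease [T_N]
   cannot move it, so it suffices to exhibit such perturbations.  Coordinate [j] enters [T_N]
   through [lg xi_j] with weight [p q^(j+w-1) / 2] ([q = 1 - p]), while lowering it raises every
   residual budget [(B - S_k) / w], [k >= j], whose weights [p^2 q^(k+w-1) w / 2] add up to
   [w] times that weight.  By concavity of the logarithm, an over-budget coordinate
   [xi_j > (B - S_j) / w] can therefore be lowered, which proves the weak inequality; it also
   forces [S_j < B].  If equality held, then [xi_j > 0] and the weak inequality at [j + 1] gives
   [xi_(j+1) < xi_j]; moving [(1 - p) (xi_j - xi_(j+1)) / 4] from coordinate [j] to [j + 1]
   changes only two terms of the series, and again does not decrease [T_N]. *)

Definition lg (g t : R) : R := log2 (1 + g * t).

Lemma ln2_pos : 0 < ln 2.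
Proof. rewrite <- ln_1. apply ln_increasing; lra. Qed.

Lemma ln_le_sub1 (t : R) : 0 < t -> ln t <= t - 1.
Proof.
  intros Ht. rewrite <- (ln_exp (t - 1)). apply ln_le; [exact Ht|].
  pose proof (exp_ineq1_le (t - 1)). lra.
Qed.

Lemma lg_nonneg (g t : R) : 0 <= g -> 0 <= t -> 0 <= lg g t.
Proof.
  intros Hg Ht. unfold lg, log2. pose proof ln2_pos.
  apply Rdiv_le_0_compat; [|lra]. rewrite <- ln_1. apply ln_le; [lra|].
  pose proof (Rmult_le_pos _ _ Hg Ht). lra.
Qed.

Lemma lg_le (g s t : R) : 0 <= g -> 0 <= s <= t -> lg g s <= lg g t.
Proof.
  intros Hg Hst. unfold lg, log2. pose proof ln2_pos.
  apply Rmult_le_compat_r; [left; apply Rinv_0_lt_compat; lra|].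
  pose proof (Rmult_le_pos g s Hg (proj1 Hst)).
  pose proof (Rmult_le_compat_l g s t Hg (proj2 Hst)).
  apply ln_le; lra.
Qed.

(* Concavity of [ln]: the secant slope is at least the derivative at the right end. *)
Lemma lg_sub_ge (g a b : R) : 0 <= g -> 0 <= a -> 0 <= b ->
  g * (b - a) / ((1 + g * b) * ln 2) <= lg g b - lg g a.
Proof.
  intros Hg Ha Hb. unfold lg, log2. pose proof ln2_pos.
  pose proof (Rmult_le_pos g a Hg Ha). pose proof (Rmult_le_pos g b Hg Hb).
  assert (Hln : ln (1 + g * a) - ln (1 + g * b) <= g * (a - b) / (1 + g * b)).
  { rewrite <- ln_div by lra.
    eapply Rle_trans; [apply ln_le_sub1; apply Rdiv_lt_0_compat; lra|].
    right. field. lra. }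
  replace (g * (b - a) / ((1 + g * b) * ln 2))
    with (- (g * (a - b) / (1 + g * b)) / ln 2) by (field; lra).
  replace (ln (1 + g * b) / ln 2 - ln (1 + g * a) / ln 2)
    with ((ln (1 + g * b) - ln (1 + g * a)) / ln 2) by (field; lra).
  apply Rmult_le_compat_r; [left; apply Rinv_0_lt_compat|]; lra.
Qed.

Lemma lg_sub_ge_of_le (g a b m : R) : 0 <= g -> 0 <= a <= b -> b <= m ->
  g * (b - a) / ((1 + g * m) * ln 2) <= lg g b - lg g a.
Proof.
  intros Hg Hab Hbm. pose proof ln2_pos.
  apply (Rle_trans _ (g * (b - a) / ((1 + g * b) * ln 2))); [|apply lg_sub_ge; lra].
  pose proof (Rmult_le_pos g b Hg ltac:(lra)).
  pose proof (Rmult_le_compat_l g b m Hg Hbm).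
  apply Rmult_le_compat_l; [apply Rmult_le_pos; lra|].
  apply Rinv_le_contravar; [apply Rmult_lt_0_compat|apply Rmult_le_compat_r]; lra.
Qed.

Lemma psum_0 (x : nat -> R) : psum x 0 = 0.
Proof. unfold psum. rewrite sum_n_m_zero; [reflexivity|lia]. Qed.

Lemma psum_S (x : nat -> R) (k : nat) : psum x (S k) = psum x k + x (S k).
Proof.
  unfold psum. destruct k as [|k].
  - rewrite sum_n_n, sum_n_m_zero by lia. unfold zero, plus; simpl. lra.
  - rewrite sum_n_Sm by lia. reflexivity.
Qed.

Lemma psum_le_psum (x : nat -> R) (k l : nat) :
  (forall j, 0 <= x j) -> (k <= l)%nat -> psum x k <= psum x l.
Proof.
  intros Hx Hkl. induction Hkl as [|l _ IH]; [lra|].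
  rewrite psum_S. specialize (Hx (S l)). lra.
Qed.

Lemma psum_nonneg (x : nat -> R) (k : nat) : (forall j, 0 <= x j) -> 0 <= psum x k.
Proof. intros Hx. rewrite <- (psum_0 x). apply psum_le_psum; [exact Hx|lia]. Qed.

Definition add_at (x : nat -> R) (i : nat) (d : R) : nat -> R :=
  fun k => if Nat.eqb k i then x k + d else x k.

Lemma add_at_eq (x : nat -> R) (i : nat) (d : R) : add_at x i d i = x i + d.
Proof. unfold add_at. now rewrite Nat.eqb_refl. Qed.

Lemma add_at_neq (x : nat -> R) (i k : nat) (d : R) : k <> i -> add_at x i d k = x k.
Proof. intros Hk. unfold add_at. now rewrite (proj2 (Nat.eqb_neq k i) Hk). Qed.

Lemma psum_add_at (x : nat -> R) (i k : nat) (d : R) : (1 <= i)%nat ->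
  psum (add_at x i d) k = psum x k + (if Nat.leb i k then d else 0).
Proof.
  intros Hi. induction k as [|k IH].
  - rewrite !psum_0. replace (Nat.leb i 0) with false by (symmetry; apply Nat.leb_gt; lia). lra.
  - rewrite !psum_S, IH. unfold add_at.
    destruct (Nat.eqb_spec (S k) i) as [<-|Hne].
    + replace (Nat.leb (S k) k) with false by (symmetry; apply Nat.leb_gt; lia).
      rewrite Nat.leb_refl. lra.
    + destruct (Nat.leb_spec i k); destruct (Nat.leb_spec i (S k)); lia || lra.
Qed.

Lemma pad_in (N : nat) (x : nat -> R) (k : nat) : (1 <= k <= N)%nat -> pad N x k = x k.
Proof.
  intros Hk. unfold pad.
  now rewrite (proj2 (Nat.leb_le 1 k) ltac:(lia)), (proj2 (Nat.leb_le k N) ltac:(lia)).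
Qed.

Lemma pad_out (N : nat) (x : nat -> R) (k : nat) : ~ (1 <= k <= N)%nat -> pad N x k = 0.
Proof.
  intros Hk. unfold pad.
  destruct (Nat.leb_spec 1 k); destruct (Nat.leb_spec k N); simpl; lia || reflexivity.
Qed.

Lemma pad_add_at (N : nat) (x : nat -> R) (i : nat) (d : R) : (1 <= i <= N)%nat ->
  pad N (add_at x i d) = add_at (pad N x) i d.
Proof.
  intros Hi. apply functional_extensionality. intros k. unfold pad, add_at.
  destruct (Nat.eqb_spec k i); destruct (Nat.leb_spec 1 k); destruct (Nat.leb_spec k N);
    simpl; lia || reflexivity.
Qed.

Lemma psum_pad (N : nat) (x : nat -> R) (k : nat) : psum (pad N x) k = psum x (Nat.min k N).
Proof.
  induction k as [|k IH]; [now rewrite !psum_0|].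
  rewrite psum_S, IH. destruct (le_lt_dec (S k) N).
  - rewrite pad_in by lia. replace (Nat.min (S k) N) with (S k) by lia.
    replace (Nat.min k N) with k by lia. now rewrite psum_S.
  - rewrite pad_out by lia. replace (Nat.min (S k) N) with N by lia.
    replace (Nat.min k N) with N by lia. lra.
Qed.

Lemma pad_nonneg (B : R) (N : nat) (x : nat -> R) (k : nat) :
  admissibleN B N x -> 0 <= pad N x k.
Proof.
  intros [Hx _]. unfold pad.
  destruct (Nat.leb_spec 1 k); destruct (Nat.leb_spec k N); simpl; try lra. apply Hx. lia.
Qed.

Lemma psum_pad_le (B : R) (N : nat) (x : nat -> R) (k : nat) :
  admissibleN B N x -> psum (pad N x) k <= B.
Proof.
  intros Hx. apply (Rle_trans _ (psum (pad N x) (Nat.max k N))).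
  - apply psum_le_psum; [intros; now apply (pad_nonneg B)|lia].
  - rewrite psum_pad. replace (Nat.min (Nat.max k N) N) with N by lia. apply Hx.
Qed.

Lemma admissibleN_add_at (B : R) (N : nat) (x : nat -> R) (i : nat) (d : R) :
  admissibleN B N x -> (1 <= i <= N)%nat -> 0 <= x i + d -> psum x N + d <= B ->
  admissibleN B N (add_at x i d).
Proof.
  intros [Hx _] Hi Hd Hs. split.
  - intros k Hk. destruct (Nat.eq_dec k i) as [->|Hki].
    + now rewrite add_at_eq.
    + rewrite add_at_neq by exact Hki. now apply Hx.
  - rewrite psum_add_at by lia. rewrite (proj2 (Nat.leb_le i N) ltac:(lia)). exact Hs.
Qed.

Lemma ex_series_geom_dominated (q M : R) (a : nat -> R) :
  0 <= q < 1 -> (forall n, 0 <= a n <= M * q ^ n) -> ex_series a.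
Proof.
  intros Hq Ha.
  apply (@ex_series_le R_AbsRing R_CompleteNormedModule _ (fun n => q ^ n * M)).
  - intros n. change (norm ?y) with (Rabs y). specialize (Ha n).
    rewrite Rabs_pos_eq by lra. lra.
  - apply ex_series_scal_r. exists (/ (1 - q)). apply is_series_geom.
    rewrite Rabs_pos_eq; lra.
Qed.

Lemma is_series_ge0_telescoping (D h : nat -> R) (s : R) :
  is_series D s -> h 0%nat = 0 -> is_lim_seq h 0 ->
  (forall n, h n - h (S n) <= D n) -> 0 <= s.
Proof.
  intros HD Hh0 Hh HDh.
  assert (Hpart : forall n, - h (S n) <= sum_n D n).
  { induction n as [|n IH].
    - rewrite sum_O. specialize (HDh 0%nat). lra.
    - rewrite sum_Sn. change (plus (sum_n D n) (D (S n))) with (sum_n D n + D (S n)).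
      specialize (HDh (S n)). lra. }
  assert (Hlim : is_lim_seq (fun n => - h (S n)) 0).
  { pose proof (proj1 (is_lim_seq_opp h 0) Hh) as Hopp.
    simpl in Hopp. rewrite Ropp_0 in Hopp.
    exact (proj1 (is_lim_seq_incr_1 _ _) Hopp). }
  exact (is_lim_seq_le _ (sum_n D) 0 s Hpart Hlim HD).
Qed.

Lemma is_series_ge0_pair (D : nat -> R) (s : R) (a : nat) :
  is_series D s -> (forall n, n <> a -> n <> S a -> D n = 0) -> 0 <= D a + D (S a) ->
  0 <= s.
Proof.
  intros HD Hzero Hpair.
  apply (is_series_ge0_telescoping D (fun n => if Nat.eqb n (S a) then D (S a) else 0) s HD).
  - reflexivity.
  - apply is_lim_seq_ext_loc with (u := fun _ => 0); [|apply is_lim_seq_const].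
    exists (S (S a)). intros n Hn. now rewrite (proj2 (Nat.eqb_neq n (S a)) ltac:(lia)).
  - intros n. destruct (Nat.eq_dec n a) as [->|Hna].
    + rewrite Nat.eqb_refl, (proj2 (Nat.eqb_neq a (S a)) ltac:(lia)). lra.
    + destruct (Nat.eq_dec n (S a)) as [->|Hnsa].
      * rewrite Nat.eqb_refl, (proj2 (Nat.eqb_neq (S (S a)) (S a)) ltac:(lia)). lra.
      * rewrite (proj2 (Nat.eqb_neq n (S a)) Hnsa), (proj2 (Nat.eqb_neq (S n) (S a)) ltac:(lia)).
        rewrite (Hzero n Hna Hnsa). lra.
Qed.

Lemma transfer_weights_ineq (p g x z e W : R) :
  0 < p < 1 -> 0 <= g -> 0 <= z < x -> 1 <= W -> e = (1 - p) * (x - z) / 4 ->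
  1 / (1 + g * (x - e)) <= p / (1 + g * (x + e / W)) + (1 - p) / (1 + g * (z + e)).
Proof.
  intros Hp Hg Hzx HW He.
  set (q := 1 - p). set (d := x - z). set (r := / W).
  assert (Hr : 0 < r <= 1).
  { split; [apply Rinv_0_lt_compat; lra|]. unfold r. rewrite <- Rinv_1.
    apply Rinv_le_contravar; lra. }
  assert (Hed : 0 < e /\ 4 * e <= d) by (unfold d, q in *; split; nra).
  set (a1 := 1 + g * (x + e * r)). set (a2 := 1 + g * (z + e)). set (a3 := 1 + g * (x - e)).
  assert (Ha2 : 0 < a2) by (unfold a2; nra).
  assert (Ha12 : a2 <= a1).
  { assert (z + e <= x + e * r) by (unfold d in *; nra).
    unfold a1, a2. apply Rplus_le_compat_l, Rmult_le_compat_l; assumption. }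
  assert (Ha3 : 0 < a3).
  { assert (0 <= x - e) by (unfold d in *; lra). unfold a3. nra. }
  (* this is where the size [e = q d / 4] of the transfer matters *)
  assert (Hcost : p * e * (r + 1) <= q * (d - 2 * e)).
  { assert (Hqd : 0 <= q * d) by (unfold q, d; apply Rmult_le_pos; lra).
    assert (Hid : q * (d - 2 * e) - p * e * (r + 1) = q * d * (2 + p * (1 - r)) / 4)
      by (rewrite He; unfold q, d; field).
    assert (0 <= q * d * (2 + p * (1 - r)) / 4)
      by (apply Rdiv_le_0_compat; [apply Rmult_le_pos; nra|lra]).
    lra. }
  assert (Hnum : p * a2 * (a1 - a3) <= q * a1 * (a3 - a2)).
  { replace (a1 - a3) with (g * e * (r + 1)) by (unfold a1, a3; ring).
    replace (a3 - a2) with (g * (d - 2 * e)) by (unfold a3, a2, d; ring).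
    assert (Ha2g : 0 <= a2 * g) by nra.
    assert (Hgqd : 0 <= g * (q * (d - 2 * e)))
      by (apply Rmult_le_pos; [|apply Rmult_le_pos]; unfold q in *; lra).
    pose proof (Rmult_le_compat_l _ _ _ Ha2g Hcost).
    pose proof (Rmult_le_compat_r _ _ _ Hgqd Ha12).
    lra. }
  assert (Hsplit : p / a1 + q / a2 - 1 / a3
                   = (q * a1 * (a3 - a2) - p * a2 * (a1 - a3)) / (a1 * a2 * a3))
    by (unfold q; field; lra).
  assert (0 <= p / a1 + q / a2 - 1 / a3).
  { rewrite Hsplit. apply Rdiv_le_0_compat; [lra|]. apply Rmult_lt_0_compat; nra. }
  unfold a1, r in *. lra.
Qed.

Lemma lg_transfer_gain_nonneg (p g x z e W : R) :
  0 < p < 1 -> 0 <= g -> 0 <= z < x -> 1 <= W -> e = (1 - p) * (x - z) / 4 ->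
  0 <= lg g (x - e) - lg g x + p * W * (lg g (x + e / W) - lg g x)
       + (1 - p) * (lg g (z + e) - lg g z).
Proof.
  intros Hp Hg Hzx HW He. pose proof ln2_pos.
  pose proof (transfer_weights_ineq p g x z e W Hp Hg Hzx HW He) as Hweights.
  assert (Hed : 0 <= e /\ e <= x) by (split; nra).
  assert (HeW : 0 <= e / W) by (apply Rdiv_le_0_compat; lra).
  pose proof (lg_sub_ge g x (x - e) Hg ltac:(lra) ltac:(lra)) as Hdown.
  pose proof (lg_sub_ge g x (x + e / W) Hg ltac:(lra) ltac:(lra)) as Hup.
  pose proof (lg_sub_ge g z (z + e) Hg ltac:(lra) ltac:(lra)) as Hnext.
  replace (x - e - x) with (- e) in Hdown by ring.
  replace (x + e / W - x) with (e / W) in Hup by ring.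
  replace (z + e - z) with e in Hnext by ring.
  set (a1 := 1 + g * (x + e / W)) in *.
  set (a2 := 1 + g * (z + e)) in *.
  set (a3 := 1 + g * (x - e)) in *.
  assert (Ha1 : 0 < a1) by (unfold a1; nra).
  assert (Ha2 : 0 < a2) by (unfold a2; nra).
  assert (Ha3 : 0 < a3) by (unfold a3; nra).
  set (K := g * e / ln 2).
  assert (HK : 0 <= K) by (apply Rdiv_le_0_compat; nra).
  replace (g * - e / (a3 * ln 2)) with (- (K * (1 / a3))) in Hdown by (unfold K; field; lra).
  replace (g * (e / W) / (a1 * ln 2)) with (K * (1 / a1) / W) in Hup by (unfold K; field; lra).
  replace (g * e / (a2 * ln 2)) with (K * (1 / a2)) in Hnext by (unfold K; field; lra).
  assert (HpW : 0 <= p * W) by nra.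
  pose proof (Rmult_le_compat_l _ _ _ HpW Hup) as HupW.
  pose proof (Rmult_le_compat_l (1 - p) _ _ ltac:(lra) Hnext) as Hnextq.
  replace (p * W * (K * (1 / a1) / W)) with (K * (p / a1)) in HupW by (field; lra).
  replace ((1 - p) * (K * (1 / a2))) with (K * ((1 - p) / a2)) in Hnextq by (field; lra).
  pose proof (Rmult_le_compat_l _ _ _ HK Hweights). lra.
Qed.

Lemma is_maximizer_of_ge (p g B : R) (w N : nat) (xi eta : nat -> R) :
  is_maximizer p g B w N xi -> admissibleN B N eta ->
  T_N p g B w N xi <= T_N p g B w N eta -> is_maximizer p g B w N eta.
Proof.
  intros [_ Hmax] Heta Hle. split; [exact Heta|].
  intros zeta Hzeta. specialize (Hmax zeta Hzeta). lra.
Qed.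

Section Gain.

Variables (p g B : R) (w : nat).
Hypotheses (Hp : 0 < p < 1) (Hg : 0 < g) (Hw : (1 <= w)%nat).

Definition budget (X : nat -> R) (k : nat) : R := (B - psum X k) / INR w.

Definition coord_term (X : nat -> R) (n : nat) : R :=
  p * (1 - p) ^ (S n + w - 1) * (1 / 2) * log2 (1 + g * X (S n)).

Definition budget_term (X : nat -> R) (n : nat) : R :=
  p ^ 2 * (1 - p) ^ (S n + w - 1) * (INR w / 2) * log2 (1 + g * budget X (S n)).

Definition marginal_gain (X X' : nat -> R) (k : nat) : R :=
  lg g (X' k) - lg g (X k) + p * INR w * (lg g (budget X' k) - lg g (budget X k)).

Definition T_gain (X X' : nat -> R) (n : nat) : R :=
  p * (1 - p) ^ (n + w) / 2 * marginal_gain X X' (S n).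

Lemma INR_w_ge1 : 1 <= INR w.
Proof. apply (le_INR 1). exact Hw. Qed.

Lemma budget_nonneg (X : nat -> R) (k : nat) : psum X k <= B -> 0 <= budget X k.
Proof. intros Hk. pose proof INR_w_ge1. apply Rdiv_le_0_compat; lra. Qed.

Lemma budget_pos (X : nat -> R) (k : nat) : psum X k < B -> 0 < budget X k.
Proof. intros Hk. pose proof INR_w_ge1. apply Rdiv_lt_0_compat; lra. Qed.

Lemma budget_le (X : nat -> R) (k : nat) : 0 <= psum X k -> budget X k <= B / INR w.
Proof.
  intros Hk. pose proof INR_w_ge1. unfold budget.
  apply Rmult_le_compat_r; [left; apply Rinv_0_lt_compat|]; lra.
Qed.

Lemma pow_shift (n : nat) : (1 - p) ^ (S n + w - 1) = (1 - p) ^ n * (1 - p) ^ w.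
Proof. rewrite <- pow_add. f_equal. lia. Qed.

Section Summability.

Variable X : nat -> R.
Hypotheses (HX : forall k, 0 <= X k) (HXB : forall k, psum X k <= B).

Lemma ex_series_coord_term : ex_series (coord_term X).
Proof.
  apply (ex_series_geom_dominated (1 - p) (p * (1 - p) ^ w / 2 * lg g B)); [lra|].
  intros n. unfold coord_term. rewrite pow_shift. fold (lg g (X (S n))).
  pose proof (pow_le (1 - p) n ltac:(lra)). pose proof (pow_le (1 - p) w ltac:(lra)).
  set (c := p * ((1 - p) ^ n * (1 - p) ^ w) * (1 / 2)).
  assert (Hc : 0 <= c) by (unfold c; apply Rmult_le_pos; [apply Rmult_le_pos|]; nra).
  assert (HXn : X (S n) <= B).
  { specialize (HXB (S n)). rewrite psum_S in HXB. pose proof (psum_nonneg X n HX). lra. }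
  replace (p * (1 - p) ^ w / 2 * lg g B * (1 - p) ^ n) with (c * lg g B) by (unfold c; field).
  split.
  - apply Rmult_le_pos; [exact Hc|apply lg_nonneg; [lra|apply HX]].
  - apply Rmult_le_compat_l; [exact Hc|apply lg_le; [lra|split; [apply HX|exact HXn]]].
Qed.

Lemma ex_series_budget_term : ex_series (budget_term X).
Proof.
  apply (ex_series_geom_dominated (1 - p) (p ^ 2 * (1 - p) ^ w * INR w / 2 * lg g (B / INR w)));
    [lra|].
  intros n. unfold budget_term. rewrite pow_shift. fold (lg g (budget X (S n))).
  pose proof (pow_le (1 - p) n ltac:(lra)). pose proof (pow_le (1 - p) w ltac:(lra)).
  pose proof INR_w_ge1.
  set (c := p ^ 2 * ((1 - p) ^ n * (1 - p) ^ w) * (INR w / 2)).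
  assert (Hc : 0 <= c).
  { unfold c. apply Rmult_le_pos; [apply Rmult_le_pos; [apply pow_le|]|]; nra. }
  pose proof (budget_nonneg X (S n) (HXB (S n))).
  pose proof (budget_le X (S n) (psum_nonneg X (S n) HX)).
  replace (p ^ 2 * (1 - p) ^ w * INR w / 2 * lg g (B / INR w) * (1 - p) ^ n)
    with (c * lg g (B / INR w)) by (unfold c; field).
  split.
  - apply Rmult_le_pos; [exact Hc|apply lg_nonneg; lra].
  - apply Rmult_le_compat_l; [exact Hc|apply lg_le; lra].
Qed.

End Summability.

Lemma T_gain_eq (X X' : nat -> R) (n : nat) :
  coord_term X' n - coord_term X n + (budget_term X' n - budget_term X n) = T_gain X X' n.
Proof.
  unfold T_gain, marginal_gain, coord_term, budget_term, lg.
  replace (S n + w - 1)%nat with (n + w)%nat by lia. field.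
Qed.

Lemma is_series_T_gain (N : nat) (xi eta : nat -> R) :
  admissibleN B N xi -> admissibleN B N eta ->
  is_series (T_gain (pad N xi) (pad N eta)) (T_N p g B w N eta - T_N p g B w N xi).
Proof.
  intros Hxi Heta. unfold T_N.
  set (X := pad N xi). set (X' := pad N eta).
  replace (T_inf p g B w X' - T_inf p g B w X)
    with ((Series (coord_term X') - Series (coord_term X))
          + (Series (budget_term X') - Series (budget_term X)))
    by (unfold T_inf, coord_term, budget_term, budget; ring).
  apply (is_series_ext _ _ _ (T_gain_eq X X')).
  assert (HX : forall k, 0 <= X k) by (intros; apply (pad_nonneg B N xi k Hxi)).
  assert (HX' : forall k, 0 <= X' k) by (intros; apply (pad_nonneg B N eta k Heta)).
  assert (HXB : forall k, psum X k <= B) by (intros; apply (psum_pad_le B N xi k Hxi)).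
  assert (HXB' : forall k, psum X' k <= B) by (intros; apply (psum_pad_le B N eta k Heta)).
  apply (@is_series_plus R_AbsRing R_NormedModule);
    apply (@is_series_minus R_AbsRing R_NormedModule); apply Series_correct.
  - exact (ex_series_coord_term X' HX' HXB').
  - exact (ex_series_coord_term X HX HXB).
  - exact (ex_series_budget_term X' HX' HXB').
  - exact (ex_series_budget_term X HX HXB).
Qed.

Lemma mul_le_of_le_budget (X : nat -> R) (k : nat) (y : R) :
  y <= budget X k -> INR w * y <= B - psum X k.
Proof.
  intros Hy. pose proof INR_w_ge1. unfold budget in Hy.
  replace (B - psum X k) with (INR w * ((B - psum X k) / INR w)) by (field; lra).
  apply Rmult_le_compat_l; lra.
Qed.

Lemma budget_pad (N : nat) (x : nat -> R) (k : nat) : (k <= N)%nat ->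
  budget (pad N x) k = budget x k.
Proof. intros Hk. unfold budget. rewrite psum_pad. now replace (Nat.min k N) with k by lia. Qed.

Lemma budget_add_at (X : nat -> R) (i k : nat) (d : R) : (1 <= i)%nat ->
  budget (add_at X i d) k = budget X k - (if Nat.leb i k then d else 0) / INR w.
Proof.
  intros Hi. pose proof INR_w_ge1. unfold budget. rewrite psum_add_at by exact Hi.
  field. lra.
Qed.

Section Decrease.

Variables (X : nat -> R) (i : nat) (e m : R).
Hypotheses (HX : forall k, 0 <= X k) (HXB : forall k, psum X k <= B) (Hi : (1 <= i)%nat)
  (He : 0 <= e) (Hm_coord : X i - e = m) (Hm_budget : budget X i + e / INR w = m).

Let kappa := g / ((1 + g * m) * ln 2).
Let X' := add_at X i (- e).

Lemma decrease_m_nonneg : 0 <= m.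
Proof.
  pose proof (budget_nonneg X i (HXB i)). pose proof INR_w_ge1.
  pose proof (Rdiv_le_0_compat e (INR w) He ltac:(lra)). lra.
Qed.

Lemma marginal_gain_decrease_before (k : nat) : (k < i)%nat -> marginal_gain X X' k = 0.
Proof.
  intros Hk. unfold marginal_gain, X'.
  rewrite add_at_neq, budget_add_at by lia.
  replace (Nat.leb i k) with false by (symmetry; apply Nat.leb_gt; lia).
  replace (budget X k - 0 / INR w) with (budget X k) by (unfold Rdiv; ring). ring.
Qed.

Lemma marginal_gain_decrease_at : - (1 - p) * kappa * e <= marginal_gain X X' i.
Proof.
  pose proof decrease_m_nonneg as Hm. pose proof INR_w_ge1. pose proof ln2_pos.
  pose proof (budget_nonneg X i (HXB i)) as Hb.
  assert (Hgm : 0 < 1 + g * m) by nra.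
  unfold marginal_gain, X'. rewrite add_at_eq, budget_add_at, Nat.leb_refl by exact Hi.
  replace (X i + - e) with m by lra.
  replace (budget X i - - e / INR w) with m by (rewrite <- Hm_budget; field; lra).
  pose proof (lg_sub_ge g (X i) m ltac:(lra) (HX i) Hm) as Hcoord.
  pose proof (lg_sub_ge g (budget X i) m ltac:(lra) Hb Hm) as Hbudget.
  replace (g * (m - X i) / ((1 + g * m) * ln 2)) with (- kappa * e) in Hcoord
    by (unfold kappa; replace (m - X i) with (- e) by lra; field; lra).
  replace (g * (m - budget X i) / ((1 + g * m) * ln 2)) with (kappa * e / INR w) in Hbudget
    by (unfold kappa; replace (m - budget X i) with (e / INR w) by lra; field; lra).
  assert (Hpw : 0 <= p * INR w) by nra.
  pose proof (Rmult_le_compat_l _ _ _ Hpw Hbudget) as Hbudget_w.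
  replace (p * INR w * (kappa * e / INR w)) with (p * kappa * e) in Hbudget_w by (field; lra).
  lra.
Qed.

Lemma marginal_gain_decrease_after (k : nat) : (i < k)%nat -> p * kappa * e <= marginal_gain X X' k.
Proof.
  intros Hk. pose proof INR_w_ge1. pose proof ln2_pos. pose proof decrease_m_nonneg.
  pose proof (budget_nonneg X k (HXB k)) as Hb.
  assert (Hbi : budget X k <= budget X i).
  { unfold budget. apply Rmult_le_compat_r; [left; apply Rinv_0_lt_compat; lra|].
    pose proof (psum_le_psum X i k HX ltac:(lia)). lra. }
  assert (Hew : 0 <= e / INR w) by (apply Rdiv_le_0_compat; lra).
  unfold marginal_gain, X'. rewrite add_at_neq, budget_add_at by lia.
  replace (Nat.leb i k) with true by (symmetry; apply Nat.leb_le; lia).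
  pose proof (lg_sub_ge_of_le g (budget X k) (budget X k - - e / INR w) m ltac:(lra)
    ltac:(lra) ltac:(lra)) as Hbudget.
  replace (g * (budget X k - - e / INR w - budget X k) / ((1 + g * m) * ln 2))
    with (kappa * e / INR w) in Hbudget by (unfold kappa; field; split; nra).
  assert (Hpw : 0 <= p * INR w) by nra.
  pose proof (Rmult_le_compat_l _ _ _ Hpw Hbudget) as Hbudget_w.
  replace (p * INR w * (kappa * e / INR w)) with (p * kappa * e) in Hbudget_w by (field; lra).
  lra.
Qed.

Lemma T_gain_decrease_telescoping (n : nat) :
  let h k := if Nat.leb i k then p * kappa * e / 2 * (1 - p) ^ (k + w) else 0 in
  h n - h (S n) <= T_gain X X' n.
Proof.
  intros h. unfold h, T_gain.
  assert (Hc : 0 <= p * (1 - p) ^ (n + w) / 2).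
  { pose proof (pow_le (1 - p) (n + w) ltac:(lra)). apply Rmult_le_pos; nra. }
  replace (S n + w)%nat with (S (n + w)) by lia. simpl pow.
  destruct (lt_eq_lt_dec (S n) i) as [[Hlt|Heq]|Hgt].
  - replace (Nat.leb i n) with false by (symmetry; apply Nat.leb_gt; lia).
    replace (Nat.leb i (S n)) with false by (symmetry; apply Nat.leb_gt; lia).
    rewrite (marginal_gain_decrease_before (S n) Hlt). lra.
  - replace (Nat.leb i n) with false by (symmetry; apply Nat.leb_gt; lia).
    rewrite Heq, Nat.leb_refl.
    pose proof (Rmult_le_compat_l _ _ _ Hc marginal_gain_decrease_at). lra.
  - replace (Nat.leb i n) with true by (symmetry; apply Nat.leb_le; lia).
    replace (Nat.leb i (S n)) with true by (symmetry; apply Nat.leb_le; lia).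
    pose proof (Rmult_le_compat_l _ _ _ Hc (marginal_gain_decrease_after (S n) Hgt)). lra.
Qed.

End Decrease.

Section Transfer.

Variables (X : nat -> R) (j : nat) (e : R).
Hypotheses (HX : forall k, 0 <= X k) (Hj : (1 <= j)%nat)
  (Htight : X j = budget X j) (Hdesc : X (S j) < X j) (He : e = (1 - p) * (X j - X (S j)) / 4).

Let X' := add_at (add_at X j (- e)) (S j) e.

Lemma budget_transfer (k : nat) :
  budget X' k = budget X k + (if Nat.eqb k j then e / INR w else 0).
Proof.
  pose proof INR_w_ge1. unfold X'. rewrite !budget_add_at by lia.
  destruct (Nat.eqb_spec k j) as [->|Hkj].
  - rewrite Nat.leb_refl. replace (Nat.leb (S j) j) with false by (symmetry; apply Nat.leb_gt; lia).
    field. lra.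
  - destruct (Nat.leb_spec j k); destruct (Nat.leb_spec (S j) k); try lia; field; lra.
Qed.

Lemma marginal_gain_transfer_other (k : nat) : k <> j -> k <> S j -> marginal_gain X X' k = 0.
Proof.
  intros Hkj HkSj. unfold marginal_gain.
  rewrite budget_transfer, (proj2 (Nat.eqb_neq k j) Hkj), Rplus_0_r.
  unfold X'. rewrite !add_at_neq by assumption. ring.
Qed.

Lemma marginal_gain_transfer_pair :
  0 <= marginal_gain X X' j + (1 - p) * marginal_gain X X' (S j).
Proof.
  pose proof INR_w_ge1 as Hw1.
  unfold marginal_gain. rewrite !budget_transfer, Nat.eqb_refl.
  replace (Nat.eqb (S j) j) with false by (symmetry; apply Nat.eqb_neq; lia).
  unfold X'. rewrite add_at_neq, add_at_eq, add_at_eq, add_at_neq by lia.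
  rewrite <- Htight.
  pose proof (lg_transfer_gain_nonneg p g (X j) (X (S j)) e (INR w) Hp ltac:(lra)
    (conj (HX (S j)) Hdesc) Hw1 He).
  replace (X j + - e) with (X j - e) by ring.
  replace (budget X (S j) + 0) with (budget X (S j)) by ring. lra.
Qed.

Lemma T_gain_transfer_other (n : nat) : n <> pred j -> n <> j -> T_gain X X' n = 0.
Proof.
  intros Hn1 Hn2. unfold T_gain. rewrite marginal_gain_transfer_other by lia. ring.
Qed.

Lemma T_gain_transfer_pair : 0 <= T_gain X X' (pred j) + T_gain X X' (S (pred j)).
Proof.
  unfold T_gain. replace (S (pred j)) with j by lia.
  replace (j + w)%nat with (S (pred j + w)) by lia. simpl pow.
  assert (Hc : 0 <= p * (1 - p) ^ (pred j + w) / 2).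
  { pose proof (pow_le (1 - p) (pred j + w) ltac:(lra)). apply Rmult_le_pos; nra. }
  pose proof (Rmult_le_pos _ _ Hc marginal_gain_transfer_pair). lra.
Qed.

End Transfer.

Section Maximizer.

Variables (N : nat) (xi : nat -> R).
Hypotheses (Hmax : is_maximizer p g B w N xi)
  (Huniq : forall eta, is_maximizer p g B w N eta ->
     forall j, (1 <= j <= N)%nat -> eta j = xi j).

Lemma maximizer_eq_of_ge (eta : nat -> R) :
  admissibleN B N eta -> T_N p g B w N xi <= T_N p g B w N eta ->
  forall j, (1 <= j <= N)%nat -> eta j = xi j.
Proof. intros Heta Hle. apply Huniq. exact (is_maximizer_of_ge p g B w N xi eta Hmax Heta Hle). Qed.

(* Moving mass [e] out of an over-budget coordinate [i] into the residual budget, with [e]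
   chosen so that both affected log arguments meet at [m], does not decrease [T_N]. *)
Lemma maximizer_le_budget (i : nat) : (1 <= i <= N)%nat -> xi i <= budget xi i.
Proof.
  intros Hi. destruct (Rle_lt_dec (xi i) (budget xi i)) as [|Hover]; [assumption|exfalso].
  pose proof INR_w_ge1. pose proof (proj1 Hmax) as Hadm.
  set (X := pad N xi).
  assert (HX : forall k, 0 <= X k) by (intros; apply (pad_nonneg B N xi k Hadm)).
  assert (HXB : forall k, psum X k <= B) by (intros; apply (psum_pad_le B N xi k Hadm)).
  assert (HXi : X i = xi i) by (apply pad_in; lia).
  assert (HbX : budget X i = budget xi i) by (apply budget_pad; lia).
  assert (Hb : 0 <= budget xi i) by (rewrite <- HbX; apply budget_nonneg, HXB).
  set (e := (xi i - budget xi i) * INR w / (INR w + 1)).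
  assert (He : 0 < e) by (apply Rdiv_lt_0_compat; nra).
  set (m := xi i - e).
  assert (Hm : budget xi i + e / INR w = m) by (unfold m, e; field; lra).
  assert (Hem : 0 <= e / INR w) by (apply Rdiv_le_0_compat; lra).
  set (eta := add_at xi i (- e)).
  assert (Heta : admissibleN B N eta).
  { apply admissibleN_add_at; [exact Hadm|exact Hi|unfold m in Hm; lra|].
    pose proof (proj2 Hadm). lra. }
  pose proof (is_series_T_gain N xi eta Hadm Heta) as Hseries.
  unfold eta in Hseries. rewrite pad_add_at in Hseries by exact Hi. fold X in Hseries.
  assert (Hgain : 0 <= T_N p g B w N eta - T_N p g B w N xi).
  { set (c := p * (g / ((1 + g * m) * ln 2)) * e / 2).
    apply (is_series_ge0_telescoping _
      (fun k => if Nat.leb i k then c * (1 - p) ^ (k + w) else 0) _ Hseries).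
    - simpl. now replace (Nat.leb i 0) with false by (symmetry; apply Nat.leb_gt; lia).
    - apply (is_lim_seq_ext_loc (fun k => c * (1 - p) ^ w * (1 - p) ^ k)).
      + exists i. intros k Hk. rewrite (proj2 (Nat.leb_le i k) Hk), pow_add. ring.
      + replace (Finite 0) with (Rbar_mult (c * (1 - p) ^ w) 0) by (simpl; f_equal; ring).
        apply is_lim_seq_scal_l, is_lim_seq_geom. rewrite Rabs_pos_eq; lra.
    - intros n.
      exact (T_gain_decrease_telescoping X i e m HX HXB ltac:(lia) ltac:(lra)
               ltac:(rewrite HXi; reflexivity) ltac:(rewrite HbX; exact Hm) n). }
  pose proof (maximizer_eq_of_ge eta Heta ltac:(lra) i Hi) as Hfixed.
  unfold eta in Hfixed. rewrite add_at_eq in Hfixed. lra.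
Qed.

Lemma maximizer_psum_lt (HB : 0 < B) (k : nat) : (k <= N)%nat -> psum xi k < B.
Proof.
  pose proof INR_w_ge1.
  induction k as [|k IH]; intros Hk; [rewrite psum_0; exact HB|].
  specialize (IH ltac:(lia)).
  pose proof (mul_le_of_le_budget _ _ _ (maximizer_le_budget (S k) ltac:(lia))) as Hle.
  pose proof (proj1 (proj1 Hmax) (S k) ltac:(lia)) as Hnn.
  rewrite psum_S in *. nra.
Qed.

Lemma maximizer_next_lt_of_tight (j : nat) : (S j <= N)%nat ->
  xi j = budget xi j -> 0 < xi j -> xi (S j) < xi j.
Proof.
  intros HjN Htight Hpos. pose proof INR_w_ge1.
  pose proof (mul_le_of_le_budget _ _ _ (maximizer_le_budget (S j) ltac:(lia))) as Hle.
  assert (Hslack : B - psum xi j <= INR w * xi j).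
  { unfold budget in Htight. rewrite Htight. right. field. lra. }
  rewrite psum_S in Hle. nra.
Qed.

Lemma maximizer_tight_not_next_lt (j : nat) : (1 <= j)%nat -> (S j <= N)%nat ->
  xi j = budget xi j -> ~ xi (S j) < xi j.
Proof.
  intros Hj HjN Htight Hdesc.
  pose proof (proj1 Hmax) as Hadm.
  set (X := pad N xi).
  assert (HX : forall k, 0 <= X k) by (intros; apply (pad_nonneg B N xi k Hadm)).
  assert (HXj : X j = xi j) by (apply pad_in; lia).
  assert (HXSj : X (S j) = xi (S j)) by (apply pad_in; lia).
  assert (HbX : budget X j = budget xi j) by (apply budget_pad; lia).
  pose proof (proj1 Hadm (S j) ltac:(lia)) as HSj.
  set (e := (1 - p) * (xi j - xi (S j)) / 4).
  assert (He : 0 < e /\ e <= xi j) by (unfold e; split; nra).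
  set (eta := add_at (add_at xi j (- e)) (S j) e).
  assert (Heta : admissibleN B N eta).
  { pose proof (proj2 Hadm).
    assert (Hadm1 : admissibleN B N (add_at xi j (- e)))
      by (apply admissibleN_add_at; [exact Hadm|lia|lra|lra]).
    apply admissibleN_add_at; [exact Hadm1|lia|rewrite add_at_neq by lia; lra|].
    rewrite psum_add_at, (proj2 (Nat.leb_le j N) ltac:(lia)) by lia. lra. }
  pose proof (is_series_T_gain N xi eta Hadm Heta) as Hseries.
  unfold eta in Hseries. rewrite !pad_add_at in Hseries by lia. fold X in Hseries.
  assert (HeX : e = (1 - p) * (X j - X (S j)) / 4) by (rewrite HXj, HXSj; reflexivity).
  assert (Hgain : 0 <= T_N p g B w N eta - T_N p g B w N xi).
  { apply (is_series_ge0_pair _ _ (pred j) Hseries).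
    - intros n Hn1 Hn2. apply T_gain_transfer_other; [exact Hj|exact Hn1|lia].
    - apply (T_gain_transfer_pair X j e HX Hj).
      + rewrite HXj, HbX. exact Htight.
      + rewrite HXj, HXSj. exact Hdesc.
      + exact HeX. }
  pose proof (maximizer_eq_of_ge eta Heta ltac:(lra) j ltac:(lia)) as Hfixed.
  unfold eta in Hfixed. rewrite add_at_neq, add_at_eq in Hfixed by lia. lra.
Qed.

End Maximizer.

End Gain.

Theorem lemma4 (p gamma B : R) (w N : nat) (xi : nat -> R) :
  0 < p < 1 -> 0 < gamma -> 0 < B -> (1 <= w)%nat -> (1 <= N)%nat ->
  is_maximizer p gamma B w N xi ->
  (forall eta, is_maximizer p gamma B w N eta ->
     forall j, (1 <= j <= N)%nat -> eta j = xi j) ->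
  forall j, (1 <= j <= N - 1)%nat ->
    xi j < (B - psum xi j) / INR w.
Proof.
  intros Hp Hg HB Hw _ Hmax Huniq j Hj.
  change ((B - psum xi j) / INR w) with (budget B w xi j).
  pose proof (maximizer_le_budget p gamma B w Hp Hg Hw N xi Hmax Huniq) as Hle.
  destruct (Rle_lt_or_eq_dec _ _ (Hle j ltac:(lia))) as [Hlt|Htight]; [exact Hlt|exfalso].
  assert (Hpos : 0 < xi j).
  { rewrite Htight. apply (budget_pos B w Hw).
    exact (maximizer_psum_lt p gamma B w Hp Hg Hw N xi Hmax Huniq HB j ltac:(lia)). }
  pose proof (maximizer_next_lt_of_tight p gamma B w Hp Hg Hw N xi Hmax Huniq j
                ltac:(lia) Htight Hpos) as Hdesc.
  exact (maximizer_tight_not_next_lt p gamma B w Hp Hg Hw N xi Hmax Huniq j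
           ltac:(lia) ltac:(lia) Htight Hdesc).
Qed.
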